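(* Let $G=(V,E)$ be a graph and $w\in\mathbb{R}^E$ with $w(E)=\sum_{e\in E}w_e\ge 0$ and $\mathrm{mc}(G,w)>0$. Then $\mathrm{sdp}_{GW}(G,w)\le \kappa(G)\cdot \mathrm{mc}(G,w)$.
   Context: Let $V=[n]$. For $w\in\mathbb{R}^E$, $\mathrm{mc}(G,w)=\max_{x\in\{\pm1\}^n}\frac12\sum_{ij\in E}w_{ij}(1-x_ix_j)$ (max-cut), and $\mathrm{sdp}_{GW}(G,w)=\max_{X\in\mathcal{E}_n}\frac14\langle L_{G,w},X\rangle$, where $\mathcal{E}_n=\{X\succeq 0: X_{ii}=1\}$ and $L_{G,w}$ is the Laplacian matrix with $(i,i)$ entry $\sum_{j:ij\in E}w_{ij}$, $(i,j)$ entry $-w_{ij}$ if $ij\in E$ and $0$ otherwise. With $\mathrm{ip}(G,w)=\max_{x\in\{\pm1\}^n}\sum_{ij\in E}w_{ij}x_ix_j$ and $\mathrm{sdp}(G,w)=\max\sum_{ij\in E}w_{ij}u_i^Tu_j$ over unit vectors $u_i\in\mathbb{R}^n$, the Grothendieck constant is $\kappa(G)=\sup_{w\in\mathbb{R}^E}\mathrm{sdp}(G,w)/\mathrm{ip}(G,w)$. *)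

From HB Require Import structures.
From mathcomp Require Import all_boot all_order all_algebra.
From mathcomp Require Import all_classical all_reals.
From mathcomp Require Import ereal.
Set Implicit Arguments. Unset Strict Implicit. Unset Printing Implicit Defensive.
Import Order.TTheory GRing.Theory Num.Theory.
Local Open Scope ring_scope.
Local Open Scope classical_set_scope.

Section Defs.
Context {R : realType} {n : nat}.

(* A simple graph on V = 'I_n (= [n]) given by its adjacency relation E;
   an edge ij is represented by the pair (i, j) with i < j.
   A weight vector w in R^E is a function w : 'I_n -> 'I_n -> R of which
   only the values w i j with i < j and E i j are ever used. *)
Definition simple_graph (E : rel 'I_n) : Prop :=
  symmetric E /\ irreflexive E.

Definition edge_sum (E : rel 'I_n) (f : 'I_n -> 'I_n -> R) : R :=
  \sum_(i < n) \sum_(j < n | (i < j)%N && E i j) f i j.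

Definition wtotal (E : rel 'I_n) (w : 'I_n -> 'I_n -> R) : R :=
  edge_sum E w.

Definition pm1 : set ('I_n -> R) := [set x | forall i, x i = 1 \/ x i = -1].

Definition mc (E : rel 'I_n) (w : 'I_n -> 'I_n -> R) : R :=
  sup [set edge_sum E (fun i j => w i j * (1 - x i * x j)) / 2 | x in pm1].

Definition ip (E : rel 'I_n) (w : 'I_n -> 'I_n -> R) : R :=
  sup [set edge_sum E (fun i j => w i j * (x i * x j)) | x in pm1].

Definition unit_rows (U : 'M[R]_n) : Prop :=
  forall i, \sum_(k < n) U i k ^+ 2 = 1.

Definition sdp (E : rel 'I_n) (w : 'I_n -> 'I_n -> R) : R :=
  sup [set edge_sum E (fun i j => w i j * \sum_(k < n) U i k * U j k)
      | U in unit_rows].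

Definition wsym (w : 'I_n -> 'I_n -> R) (i j : 'I_n) : R :=
  if (i < j)%N then w i j else w j i.

Definition laplacian (E : rel 'I_n) (w : 'I_n -> 'I_n -> R) : 'M[R]_n :=
  \matrix_(i < n, j < n)
    if i == j then \sum_(k < n | E i k) wsym w i k
    else if E i j then - wsym w i j else 0.

Definition psd (X : 'M[R]_n) : Prop :=
  X^T = X /\ forall v : 'cV[R]_n, 0 <= (v^T *m X *m v) ord0 ord0.

Definition elliptope : set 'M[R]_n :=
  [set X | psd X /\ forall i, X i i = 1].

Definition frob (A B : 'M[R]_n) : R := \sum_(i < n) \sum_(j < n) A i j * B i j.

Definition sdpGW (E : rel 'I_n) (w : 'I_n -> 'I_n -> R) : R :=
  sup [set frob (laplacian E w) X / 4 | X in elliptope].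

(* Grothendieck constant kappa(G) in the extended reals; the ratio is taken
   over the weights with ip(G,w) > 0 (ip(G,w) = 0 only for w = 0 on E). *)
Definition kappa (E : rel 'I_n) : \bar R :=
  ereal_sup [set ((sdp E w) / (ip E w))%:E
            | w in [set w : 'I_n -> 'I_n -> R | 0 < ip E w]].

End Defs.

From HB Require Import structures.
From mathcomp Require Import all_boot all_order all_algebra.
From mathcomp Require Import all_classical all_reals.
From mathcomp Require Import ereal.
From mathcomp Require Import ring lra.
Set Implicit Arguments.
Unset Strict Implicit.
Unset Printing Implicit Defensive.
Import Order.TTheory GRing.Theory Num.Theory.
Local Open Scope ring_scope.

(* Put v := -w.  A cut x has value (w(E) + sum_ij v_ij x_i x_j) / 2, so
   mc(G,w) = (w(E) + ip(G,v)) / 2; every X in the elliptope is the Gram matrix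
   of unit vectors, so likewise sdp_GW(G,w) <= (w(E) + sdp(G,v)) / 2.  When
   kappa(G) = k is finite, sdp(G,v) <= k ip(G,v): for ip(G,v) = 0 this holds
   because the edge form is multiaffine, so each column of a Gram
   factorization contributes at most ip(G,v).  Finally k >= 1 and w(E) >= 0
   give (w(E) + k ip(G,v)) / 2 <= k (w(E) + ip(G,v)) / 2 = k mc(G,w). *)

Section GramFactorization.
Context {R : realType} {n : nat}.
Notation I := 'I_n.

Definition bilin (A : I -> I -> R) (u v : I -> R) : R :=
  \sum_i \sum_j u i * A i j * v j.

Definition psd_fun (A : I -> I -> R) : Prop :=
  (forall i j, A i j = A j i) /\ forall v, 0 <= bilin A v v.

Definition kdelta (k i : I) : R := (i == k)%:R.

Lemma bilinDl A u u' v :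
  bilin A (fun i => u i + u' i) v = bilin A u v + bilin A u' v.
Proof.
rewrite /bilin -big_split; apply: eq_bigr => i _; rewrite -big_split.
by apply: eq_bigr => j _; rewrite !mulrDl.
Qed.

Lemma bilinDr A u v v' :
  bilin A u (fun i => v i + v' i) = bilin A u v + bilin A u v'.
Proof.
rewrite /bilin -big_split; apply: eq_bigr => i _; rewrite -big_split.
by apply: eq_bigr => j _; rewrite !mulrDr.
Qed.

Lemma bilinZl A c u v : bilin A (fun i => c * u i) v = c * bilin A u v.
Proof.
rewrite /bilin mulr_sumr; apply: eq_bigr => i _; rewrite mulr_sumr.
by apply: eq_bigr => j _; rewrite !mulrA.
Qed.

Lemma bilinZr A c u v : bilin A u (fun i => c * v i) = c * bilin A u v.
Proof.
rewrite /bilin mulr_sumr; apply: eq_bigr => i _; rewrite mulr_sumr.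
by apply: eq_bigr => j _; rewrite mulrCA.
Qed.

Lemma sum_kdeltal k (F : I -> R) : \sum_i kdelta k i * F i = F k.
Proof.
rewrite (bigD1 k) //= /kdelta eqxx mul1r big1 ?addr0 // => i /negbTE ->.
by rewrite mul0r.
Qed.

Lemma sum_kdeltar k (F : I -> R) : \sum_i F i * kdelta k i = F k.
Proof.
by rewrite -[RHS](sum_kdeltal k); apply: eq_bigr => i _; rewrite mulrC.
Qed.

Lemma bilin_kdeltal A k v : bilin A (kdelta k) v = \sum_j A k j * v j.
Proof.
rewrite /bilin -(sum_kdeltal k (fun i => \sum_j A i j * v j)).
by apply: eq_bigr => i _; rewrite mulr_sumr; apply: eq_bigr => j _; rewrite mulrA.
Qed.

Lemma bilin_kdeltar A k u : bilin A u (kdelta k) = \sum_i u i * A i k.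
Proof.
by apply: eq_bigr => i _; rewrite -(sum_kdeltar k (fun j => u i * A i j)).
Qed.

Lemma bilin_kdelta A k l : bilin A (kdelta k) (kdelta l) = A k l.
Proof. by rewrite bilin_kdeltal sum_kdeltar. Qed.

Lemma psd_fun_diag_ge0 A k : psd_fun A -> 0 <= A k k.
Proof. by case=> _ /(_ (kdelta k)); rewrite bilin_kdelta. Qed.

(* Testing on t e_k + e_j with t := -(1 + B j j) / (2 B k j) gives the value -1. *)
Lemma psd_fun_diag0_row B k j : psd_fun B -> B k k = 0 -> B k j = 0.
Proof.
move=> [Bsym Bpos] Bkk; apply/eqP; apply: contraT => Bkj.
set t := - (1 + B j j) / (2 * B k j).
have := Bpos (fun i => t * kdelta k i + kdelta j i).
rewrite bilinDl !bilinDr !bilinZl !bilinZr !bilin_kdelta Bkk (Bsym j k).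
have -> : t * (t * 0) + t * B k j + (t * B k j + B j j) = - 1.
  by rewrite /t; field.
by rewrite oppr_ge0 ler10.
Qed.

Lemma psd_fun_schur B k : psd_fun B -> 0 < B k k ->
  psd_fun (fun i j => B i j - B i k * B k j / B k k).
Proof.
move=> [Bsym Bpos] Bkk; split.
  by move=> i j; rewrite (Bsym i j) (Bsym k j) (Bsym i k) [B k i * _]mulrC.
move=> v; set p := B k k; set s := \sum_j B k j * v j.
have schur_form : bilin (fun i j => B i j - B i k * B k j / p) v v =
    bilin B v v - s * s / p.
  have -> : s * s / p = \sum_i \sum_j v i * (B i k * B k j / p) * v j.
    rewrite -mulrA {1}/s mulr_suml; apply: eq_bigr => i _.
    rewrite /s mulr_suml mulr_sumr; apply: eq_bigr => j _.
    by rewrite (Bsym k i); ring.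
  rewrite /bilin -sumrB; apply: eq_bigr => i _.
  by rewrite -sumrB; apply: eq_bigr => j _; ring.
rewrite schur_form.
have := Bpos (fun i => v i + (- s / p) * kdelta k i).
rewrite bilinDl !bilinDr !bilinZl !bilinZr bilin_kdelta bilin_kdeltal bilin_kdeltar.
have -> : \sum_i v i * B i k = s by apply: eq_bigr => i _; rewrite Bsym mulrC.
suff -> : bilin B v v + - s / p * s + (- s / p * s + - s / p * (- s / p * p))
    = bilin B v v - s * s / p by [].
by rewrite /p; field; exact: lt0r_neq0.
Qed.

(* Cholesky factorization by symmetric Gaussian elimination: after m pivots,
   A = U U^T + B with B psd, zero on its first m rows, and U zero on its last
   n - m columns. *)
Definition partial_gram (A : I -> I -> R) m (U B : I -> I -> R) : Prop :=
  [/\ psd_fun B,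
      forall i j, A i j = \sum_l U i l * U j l + B i j,
      forall i j : I, (i < m)%N -> B i j = 0 &
      forall i l : I, (m <= l)%N -> U i l = 0].

Lemma partial_gram0 A : psd_fun A -> partial_gram A 0 (fun _ _ => 0) A.
Proof.
by split=> // i j; rewrite big1 ?add0r // => l _; rewrite mul0r.
Qed.

Lemma partial_gram_step A m U B : (m < n)%N -> partial_gram A m U B ->
  exists U' B', partial_gram A m.+1 U' B'.
Proof.
move=> ltmn [pB eA zB zU]; pose k : I := Ordinal ltmn.
have row_k (i : I) : (i < m.+1)%N -> (i < m)%N \/ i = k.
  rewrite ltnS leq_eqVlt => /orP [/eqP ik|]; [right; exact: val_inj | by left].
have [Bkk|Bkk] := eqVneq (B k k) 0.
  exists U, B; split=> // [i j /row_k [/zB //|->]|i l ml].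
    exact: psd_fun_diag0_row.
  exact/zU/ltnW.
have Bkk_gt0 : 0 < B k k by rewrite lt_def Bkk psd_fun_diag_ge0.
set r := Num.sqrt (B k k).
have r_sq : r * r = B k k by rewrite -expr2 sqr_sqrtr ?ltW.
have r_neq0 : r != 0 by rewrite sqrtr_eq0 -ltNge.
exists (fun i l => if l == k then B i k / r else U i l).
exists (fun i j => B i j - B i k * B k j / B k k); split.
- exact: psd_fun_schur.
- move=> i j; rewrite eA (bigD1 k) //= [in RHS](bigD1 k) //= eqxx zU // mul0r add0r.
  under [in RHS]eq_bigr => l /negbTE -> do [].
  rewrite (pB.1 j k) -r_sq; field; exact: r_neq0.
- move=> i j /row_k [im|->]; last by field; exact: lt0r_neq0.
  by rewrite (zB i j im) (zB i k im) !mul0r subr0.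
- move=> i l ml; have /negbTE -> : l != k.
    by apply: contraTneq ml => ->; rewrite /= ltnn.
  exact/zU/ltnW.
Qed.

Lemma psd_fun_gram A : psd_fun A ->
  exists U : I -> I -> R, forall i j, A i j = \sum_l U i l * U j l.
Proof.
move=> pA; have gram m : (m <= n)%N -> exists U B, partial_gram A m U B.
  elim: m => [_|m IH lemn]; first by exists (fun _ _ => 0), A; exact: partial_gram0.
  have [U [B gUB]] := IH (ltnW lemn).
  exact: partial_gram_step gUB.
have [U [B [_ eA zB _]]] := gram n (leqnn n).
by exists U => i j; rewrite eA zB ?addr0.
Qed.

End GramFactorization.

Section EdgeSum.
Context {R : realType} {n : nat} (E : rel 'I_n).
Notation I := 'I_n.

Lemma eq_edge_sum (f g : I -> I -> R) :
  (forall i j : I, (i < j)%N -> E i j -> f i j = g i j) ->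
  edge_sum E f = edge_sum E g.
Proof.
by move=> fg; apply: eq_bigr => i _; apply: eq_bigr => j /andP[]; exact: fg.
Qed.

Lemma edge_sumD (f g : I -> I -> R) :
  edge_sum E (fun i j => f i j + g i j) = edge_sum E f + edge_sum E g.
Proof. by rewrite /edge_sum -big_split; apply: eq_bigr => i _; exact: big_split. Qed.

Lemma edge_sumZ c (f : I -> I -> R) :
  edge_sum E (fun i j => c * f i j) = c * edge_sum E f.
Proof. by rewrite /edge_sum mulr_sumr; apply: eq_bigr => i _; rewrite mulr_sumr. Qed.

Lemma edge_sumN (f : I -> I -> R) :
  edge_sum E (fun i j => - f i j) = - edge_sum E f.
Proof. by rewrite -mulN1r -edge_sumZ; apply: eq_edge_sum => i j _ _; rewrite mulN1r. Qed.

Lemma ler_edge_sum (f g : I -> I -> R) : (forall i j, f i j <= g i j) ->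
  edge_sum E f <= edge_sum E g.
Proof. by move=> fg; apply: ler_sum => i _; apply: ler_sum => j _; exact: fg. Qed.

Lemma edge_sum_le_norm (v f : I -> I -> R) c : (forall i j, `|f i j| <= c) ->
  edge_sum E (fun i j => v i j * f i j) <= edge_sum E (fun i j => `|v i j| * c).
Proof.
move=> fc; apply: ler_edge_sum => i j; apply: le_trans (ler_norm _) _.
by rewrite normrM ler_wpM2l.
Qed.

Lemma edge_sum_dot (v U : I -> I -> R) :
  edge_sum E (fun i j => v i j * \sum_l U i l * U j l) =
  \sum_l edge_sum E (fun i j => v i j * (U i l * U j l)).
Proof.
rewrite /edge_sum exchange_big; apply: eq_bigr => i _.
by rewrite exchange_big; apply: eq_bigr => j _; rewrite mulr_sumr.
Qed.

Lemma wsym_sym (w : I -> I -> R) i j : wsym w i j = wsym w j i.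
Proof. by rewrite /wsym; case: ltngtP => // /val_inj->. Qed.

Lemma sum_adjacent_sym (g : I -> I -> R) : simple_graph E ->
  (forall i j, g i j = g j i) ->
  \sum_i \sum_(j | E i j) g i j = 2 * edge_sum E g.
Proof.
move=> [Esym Eirr] gsym.
have split_nbhd (i : I) : \sum_(j | E i j) g i j =
    \sum_(j : I | (i < j)%N && E i j) g i j +
    \sum_(j : I | (j < i)%N && E i j) g i j.
  rewrite (bigID (fun j : I => (i < j)%N)) /=; congr (_ + _).
    by apply: eq_bigl => j; rewrite andbC.
  apply: eq_bigl => j; rewrite -leqNgt; case Eij: (E i j); rewrite ?andbF ?andbT //.
  rewrite leq_eqVlt; case: eqVneq => [ij|//] /=.
  by move: Eij; rewrite (val_inj ij) Eirr.
rewrite (eq_bigr _ (fun i _ => split_nbhd i)) big_split /= mulr2n mulrDl mul1r.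
congr (_ + _); under eq_bigr do rewrite big_mkcond /=.
rewrite exchange_big; apply: eq_bigr => i _; rewrite [RHS]big_mkcond.
by apply: eq_bigr => j _; rewrite (Esym j i) gsym.
Qed.

Lemma frob_laplacian (w : I -> I -> R) (X : 'M[R]_n) : simple_graph E ->
  (forall i j, X i j = X j i) -> (forall i, X i i = 1) ->
  frob (laplacian E w) X =
    2 * wtotal E w - 2 * edge_sum E (fun i j => w i j * X i j).
Proof.
move=> sg Xsym Xdiag; have [_ Eirr] := sg.
have degrees : \sum_i \sum_(k | E i k) wsym w i k = 2 * wtotal E w.
  rewrite sum_adjacent_sym //; last exact: wsym_sym.
  by congr (_ * _); apply: eq_edge_sum => i j ij _; rewrite /wsym ij.
have off_diag : \sum_i \sum_(j | E i j) wsym w i j * X i j =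
    2 * edge_sum E (fun i j => w i j * X i j).
  rewrite sum_adjacent_sym //; last by move=> i j; rewrite wsym_sym Xsym.
  by congr (_ * _); apply: eq_edge_sum => i j ij _; rewrite /wsym ij.
rewrite -degrees -off_diag /frob -sumrB; apply: eq_bigr => i _.
rewrite (bigD1 i) //= /laplacian !mxE eqxx Xdiag mulr1; congr (_ + _).
rewrite -sumrN [RHS]big_mkcond [RHS](bigD1 i) //= Eirr add0r; apply: eq_bigr => j ji.
by rewrite mxE eq_sym (negbTE ji); case: (E i j); rewrite ?mulNr ?mul0r ?oppr0.
Qed.

End EdgeSum.

Section EdgeForm.
Context {R : realType} {n : nat} (E : rel 'I_n).
Notation I := 'I_n.

Definition edge_form (v : I -> I -> R) (y : I -> R) : R :=
  edge_sum E (fun i j => v i j * (y i * y j)).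

Definition update (y : I -> R) (k : I) (t : R) : I -> R :=
  fun i => if i == k then t else y i.

Lemma eq_edge_form v y y' : y =1 y' -> edge_form v y = edge_form v y'.
Proof. by move=> yy'; apply: eq_edge_sum => i j _ _; rewrite !yy'. Qed.

(* Edges are pairs i < j, so no term contains y k twice: the form is affine in y k. *)
Lemma edge_form_update v y k t : edge_form v (update y k t) =
  (1 + t) / 2 * edge_form v (update y k 1) +
  (1 - t) / 2 * edge_form v (update y k (-1)).
Proof.
rewrite /edge_form -!edge_sumZ -edge_sumD; apply: eq_edge_sum => i j ij _.
have ij' : i != j by apply: contraTneq ij => ->; rewrite ltnn.
rewrite /update; case: (eqVneq i k) => [ik|_]; case: (eqVneq j k) => [jk|_];
  by [move: ij'; rewrite ik jk eqxx | field].
Qed.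

Lemma edge_form_vertex v y : (forall i, `|y i| <= 1) ->
  exists2 x, pm1 x & edge_form v y <= edge_form v x.
Proof.
suff vertex m y' : (forall i, `|y' i| <= 1) ->
    (forall i : I, (m <= i)%N -> y' i = 1 \/ y' i = -1) ->
    exists2 x, pm1 x & edge_form v y' <= edge_form v x.
  by move=> y1; apply: (vertex n) => // i; rewrite leqNgt ltn_ord.
elim: m y' => [|m IH] y' y1 ym; first by exists y' => // i; exact: ym.
have [ltmn|lenm] := ltnP m n; last first.
  by apply: IH => // i; rewrite leqNgt (leq_trans (ltn_ord i) lenm).
pose k : I := Ordinal ltmn.
have upd_box t : -1 <= t <= 1 -> forall i, `|update y' k t i| <= 1.
  by move=> t1 i; rewrite /update; case: (i == k) => //; rewrite ler_norml.
have upd_vertex t : t = 1 \/ t = -1 ->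
    forall i : I, (m <= i)%N -> update y' k t i = 1 \/ update y' k t i = -1.
  move=> t1 i mi; rewrite /update; case: eqVneq => [//|ik]; apply: ym.
  by rewrite ltn_neqAle mi andbT; apply: contra ik => /eqP im; exact/eqP/val_inj.
have [x1 px1 le1] := IH _ (upd_box 1 ltac:(lra)) (upd_vertex 1 (or_introl erefl)).
have [x2 px2 le2] :=
  IH _ (upd_box (-1) ltac:(lra)) (upd_vertex (-1) (or_intror erefl)).
have -> : edge_form v y' = edge_form v (update y' k (y' k)).
  by apply: eq_edge_form => i; rewrite /update; case: eqVneq => // ->.
have := y1 k; rewrite edge_form_update ler_norml => /andP[yk1 yk2].
set S1 := edge_form v (update y' k 1) in le1 *.
set S2 := edge_form v (update y' k (-1)) in le2 *.
have [S21|S12] := lerP S2 S1.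
  by exists x1 => //; apply: le_trans le1; nra.
by exists x2 => //; apply: le_trans le2; nra.
Qed.

Lemma pm1_norm (x : I -> R) i : pm1 x -> `|x i| = 1.
Proof. by move=> /(_ i) [] ->; rewrite ?normrN normr1. Qed.

Lemma pm1_cst1 : pm1 (fun _ : I => 1 : R).
Proof. by move=> i; left. Qed.

Lemma ip_has_ubound v : has_ubound [set edge_form v x | x in pm1].
Proof.
exists (edge_sum E (fun i j => `|v i j| * 1)) => _ [x px <-].
by apply: edge_sum_le_norm => i j; rewrite normrM !pm1_norm // mulr1.
Qed.

Lemma edge_form_le_ip v x : pm1 x -> edge_form v x <= ip E v.
Proof. by move=> px; apply: (ub_le_sup (ip_has_ubound v)); exists x. Qed.

Lemma ip_le v c : (forall x, pm1 x -> edge_form v x <= c) -> ip E v <= c.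
Proof.
move=> xc; apply: ge_sup; last by move=> _ [x px <-]; exact: xc.
by exists (edge_form v (fun _ => 1)), (fun _ => 1) => //; exact: pm1_cst1.
Qed.

Lemma box_edge_form_le_ip v y : (forall i, `|y i| <= 1) -> edge_form v y <= ip E v.
Proof.
move=> y1; have [x px yx] := edge_form_vertex v y1.
by apply: le_trans yx _; exact: edge_form_le_ip.
Qed.

Lemma ip_ge0 (v : I -> I -> R) : 0 <= ip E v.
Proof.
have -> : 0 = edge_form v (fun _ => 0).
  by rewrite /edge_form /edge_sum big1 // => i _; rewrite big1 // => j _; rewrite !mul0r mulr0.
by apply: box_edge_form_le_ip => i; rewrite normr0.
Qed.

Lemma wtotal_le_ip (w : I -> I -> R) : wtotal E w <= ip E w.
Proof.
have -> : wtotal E w = edge_form w (fun _ => 1).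
  by apply: eq_edge_sum => i j _ _; rewrite !mulr1.
exact/edge_form_le_ip/pm1_cst1.
Qed.

End EdgeForm.

Section Relaxations.
Context {R : realType} {n : nat} (E : rel 'I_n).
Notation I := 'I_n.

Lemma cut_value_edge_form (w : I -> I -> R) x :
  edge_sum E (fun i j => w i j * (1 - x i * x j)) / 2 =
  (wtotal E w + edge_form E (fun i j => - w i j) x) / 2.
Proof.
rewrite /wtotal /edge_form -edge_sumD.
by congr (_ / _); apply: eq_edge_sum => i j _ _; ring.
Qed.

Lemma mc_ip (w : I -> I -> R) :
  mc E w = (wtotal E w + ip E (fun i j => - w i j)) / 2.
Proof.
set v := fun i j => - w i j.
have cut_le x : pm1 x ->
    edge_sum E (fun i j => w i j * (1 - x i * x j)) / 2 <= (wtotal E w + ip E v) / 2.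
  by move=> px; rewrite cut_value_edge_form ler_pM2r ?lerD2l ?edge_form_le_ip.
apply/le_anti/andP; split.
  apply: ge_sup; last by move=> _ [x px <-]; exact: cut_le.
  by exists (edge_sum E (fun i j => w i j * (1 - 1 * 1)) / 2), (fun _ => 1);
    [exact: pm1_cst1|].
have cut_le_mc x : pm1 x -> edge_sum E (fun i j => w i j * (1 - x i * x j)) / 2 <= mc E w.
  move=> px; apply: ub_le_sup; last by exists x.
  by exists ((wtotal E w + ip E v) / 2) => _ [y py <-]; exact: cut_le.
suff : ip E v <= 2 * mc E w - wtotal E w by lra.
apply: ip_le => x px; have := cut_le_mc x px; rewrite cut_value_edge_form; lra.
Qed.

Lemma unit_rows_entry_le1 (U : 'M[R]_n) i l : unit_rows U -> `|U i l| <= 1.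
Proof.
move=> rowsU; have sq_le1 : U i l ^+ 2 <= 1.
  by rewrite -(rowsU i) (bigD1 l) //= lerDl; apply: sumr_ge0 => k _; exact: sqr_ge0.
by rewrite ler_norml; apply/andP; split; nra.
Qed.

Lemma unit_rows_dot_le1 (U : 'M[R]_n) i j :
  unit_rows U -> `|\sum_k U i k * U j k| <= 1.
Proof.
move=> rowsU; apply: le_trans (ler_norm_sum _ _ _) _.
apply: (@le_trans _ _ (\sum_k (U i k ^+ 2 + U j k ^+ 2) / 2)).
  apply: ler_sum => k _; rewrite ler_norml; apply/andP.
  have := sqr_ge0 (U i k - U j k); have := sqr_ge0 (U i k + U j k).
  by rewrite !sqrrD !sqrrN; split; lra.
by rewrite -mulr_suml big_split /= !rowsU; lra.
Qed.

Lemma unit_rows1 : unit_rows (1%:M : 'M[R]_n).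
Proof.
move=> i; rewrite (bigD1 i) //= big1 ?addr0; first by rewrite mxE eqxx expr1n.
by move=> k /negbTE ki; rewrite mxE eq_sym ki expr0n.
Qed.

Lemma gram_le_sdp (v : I -> I -> R) (U : 'M[R]_n) : unit_rows U ->
  edge_sum E (fun i j => v i j * \sum_k U i k * U j k) <= sdp E v.
Proof.
move=> rowsU; apply: ub_le_sup; last by exists U.
exists (edge_sum E (fun i j => `|v i j| * 1)) => _ [V rowsV <-].
by apply: edge_sum_le_norm => i j; exact: unit_rows_dot_le1.
Qed.

(* Each column of a Gram factorization is a point of the box [-1, 1]^n. *)
Lemma sdp_le_ipMn (v : I -> I -> R) : sdp E v <= ip E v *+ n.
Proof.
apply: ge_sup; first by exists (edge_sum E (fun i j => v i j * \sum_k
  (1%:M : 'M[R]_n) i k * 1%:M j k)), 1%:M => //; exact: unit_rows1.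
move=> _ [U rowsU <-]; rewrite edge_sum_dot.
apply: (@le_trans _ _ (\sum_(l < n) ip E v)); last by rewrite sumr_const card_ord.
apply: ler_sum => l _.
by apply: box_edge_form_le_ip => i; exact: unit_rows_entry_le1.
Qed.

(* The sign vector x is realised by the unit vectors u_i := x_i (1, ..., 1) / sqrt n. *)
Lemma ip_le_sdp (v : I -> I -> R) : ip E v <= sdp E v.
Proof.
apply: ip_le => x px; set s := Num.sqrt (n%:R : R).
pose U : 'M[R]_n := \matrix_(i, k) (x i / s).
have s_sq : s ^+ 2 = n%:R :> R.
  by rewrite sqr_sqrtr // ler0n.
have n_neq0 (i : I) : n%:R != 0 :> R.
  by rewrite pnatr_eq0 -lt0n (leq_ltn_trans (leq0n i) (ltn_ord i)).
have rowsU : unit_rows U.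
  move=> i; under eq_bigr do rewrite mxE expr_div_n s_sq.
  rewrite sumr_const card_ord -mulr_natr; have [->|->] := px i.
    by rewrite expr1n; field; exact: n_neq0.
  by rewrite sqrrN expr1n; field; exact: n_neq0.
suff -> : edge_form E v x =
    edge_sum E (fun i j => v i j * \sum_k U i k * U j k) by exact: gram_le_sdp.
apply: eq_edge_sum => i j _ _; congr (_ * _).
under eq_bigr do rewrite !mxE.
rewrite sumr_const card_ord -mulr_natr -s_sq; field.
by rewrite -sqrf_eq0 s_sq n_neq0.
Qed.

End Relaxations.

Section Elliptope.
Context {R : realType} {n : nat}.
Notation I := 'I_n.

Lemma psd_fun_of_psd (X : 'M[R]_n) : psd X -> psd_fun (fun i j => X i j).
Proof.
move=> [Xsym Xpos]; split=> [i j|v]; first by rewrite -[in LHS]Xsym mxE.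
have := Xpos (\col_i v i).
suff -> : ((\col_i v i)^T *m X *m \col_i v i) ord0 ord0 = bilin X v v by [].
rewrite mxE /bilin exchange_big; apply: eq_bigr => j _.
by rewrite !mxE mulr_suml; apply: eq_bigr => i _; rewrite !mxE.
Qed.

Lemma elliptope_gram (X : 'M[R]_n) : elliptope X ->
  exists2 U : 'M[R]_n, unit_rows U & forall i j, X i j = \sum_k U i k * U j k.
Proof.
move=> [psdX diagX]; have [U gramU] := psd_fun_gram (psd_fun_of_psd psdX).
exists (\matrix_(i, k) U i k) => [i|i j].
  by rewrite -(diagX i) gramU; apply: eq_bigr => k _; rewrite mxE expr2.
by rewrite gramU; apply: eq_bigr => k _; rewrite !mxE.
Qed.

Lemma elliptope1 : elliptope (1%:M : 'M[R]_n).
Proof.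
split=> [|i]; last by rewrite mxE eqxx.
split=> [|v]; first exact: trmx1.
rewrite mulmx1 mxE; apply: sumr_ge0 => i _; rewrite mxE -expr2; exact: sqr_ge0.
Qed.

Lemma sdpGW_le_sdp (E : rel I) (w : I -> I -> R) : simple_graph E ->
  sdpGW E w <= (wtotal E w + sdp E (fun i j => - w i j)) / 2.
Proof.
move=> sg; apply: ge_sup.
  by exists (frob (laplacian E w) 1%:M / 4), 1%:M => //; exact: elliptope1.
move=> _ [X ellX <-]; have [U rowsU gramX] := elliptope_gram ellX.
have Xsym i j : X i j = X j i.
  by rewrite !gramX; apply: eq_bigr => l _; rewrite mulrC.
rewrite frob_laplacian //; last exact: ellX.2.
suff : - edge_sum E (fun i j => w i j * X i j) <= sdp E (fun i j => - w i j) by lra.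
have -> : - edge_sum E (fun i j => w i j * X i j) =
    edge_sum E (fun i j => - w i j * \sum_k U i k * U j k).
  by rewrite -edge_sumN; apply: eq_edge_sum => i j _ _; rewrite gramX mulNr.
exact: gram_le_sdp.
Qed.

End Elliptope.

Section Grothendieck.
Context {R : realType} {n : nat} (E : rel 'I_n).
Notation I := 'I_n.

Lemma ratio_le_kappa (u : I -> I -> R) : 0 < ip E u ->
  ((sdp E u / ip E u)%:E <= kappa E)%E.
Proof. by move=> ip_u; apply: ereal_sup_ubound; exists u. Qed.

Lemma kappa_ge1 (u : I -> I -> R) : 0 < ip E u -> (1 <= (kappa E : \bar R))%E.
Proof.
move=> ip_u; have := ratio_le_kappa ip_u; apply: le_trans.
by rewrite lee_fin ler_pdivlMr // mul1r ip_le_sdp.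
Qed.

Lemma sdp_le_kappa_ip (k : R) (u : I -> I -> R) : kappa E = k%:E ->
  sdp E u <= k * ip E u.
Proof.
move=> kE; have [ip0|ip_u] := eqVneq (ip E u) 0.
  by have := sdp_le_ipMn E u; rewrite ip0 mul0rn mulr0.
have ip_gt0 : 0 < ip E u by rewrite lt_def ip_u ip_ge0.
by rewrite -ler_pdivrMr // -lee_fin -kE ratio_le_kappa.
Qed.

End Grothendieck.

Theorem mainTheorem3 (R : realType) (n : nat) (E : rel 'I_n)
  (w : 'I_n -> 'I_n -> R) :
  simple_graph E -> 0 <= wtotal E w -> 0 < mc E w ->
  ((sdpGW E w)%:E <= kappa E * (mc E w)%:E)%E.
Proof.
move=> sg W_ge0 mc_gt0; set v := fun i j => - w i j.
have mcE : mc E w = (wtotal E w + ip E v) / 2 := mc_ip E w.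
have [u ip_u] : exists u : 'I_n -> 'I_n -> R, 0 < ip E u.
  have [ip_v|ip_v] := ltP 0 (ip E v); first by exists v.
  by exists w; apply: lt_le_trans (wtotal_le_ip E w); lra.
case kE : (kappa E) (kappa_ge1 ip_u) => [k| |] // k_ge1.
  rewrite -EFinM lee_fin; rewrite lee_fin in k_ge1.
  have := sdpGW_le_sdp w sg; have := sdp_le_kappa_ip v kE; nra.
by rewrite gt0_mulye ?leey.
Qed.
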